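(* Let $|\Omega\rangle=d^{-1/2}\sum_{j=1}^d|j,j\rangle$ and $\mathcal{U}=\mathrm{conv}\{(\mathbb{1}\otimes U)|\Omega\rangle\langle\Omega|(\mathbb{1}\otimes U^\dagger): U\in\mathcal{M}_d\text{ unitary}\}$. For a unital quantum channel $T:\mathcal{M}_d\to\mathcal{M}_d$ (completely positive, trace-preserving, $T(\mathbb{1})=\mathbb{1}$) with Jamiolkowski state $\rho_T=(\mathrm{id}\otimes T)(|\Omega\rangle\langle\Omega|)$, define $$\|T\|_{\mathcal{U}}:=\inf\{\alpha_p+\alpha_n:\ \rho_T=\alpha_p\sigma_p-\alpha_n\sigma_n,\ \alpha_p,\alpha_n\ge0,\ \sigma_p,\sigma_n\in\mathcal{U}\}.$$ Let $T_1,\dots,T_k$ be unital quantum channels on $\mathcal{M}_d$ and $p_1,\dots,p_k\ge0$ with $\sum_ip_i=1$. Then $\|T_1\circ T_2\circ\cdots\circ T_k\|_{\mathcal{U}}\le\prod_i\|T_i\|_{\mathcal{U}}$ and $\|\sum_ip_iT_i\|_{\mathcal{U}}\le\sum_ip_i\|T_i\|_{\mathcal{U}}$. *)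

From HB Require Import structures.
From mathcomp Require Import all_boot all_order all_algebra.
From mathcomp Require Import all_classical all_reals ereal.
From mathcomp Require Import complex mxtens.

Set Implicit Arguments.
Unset Strict Implicit.
Unset Printing Implicit Defensive.

Import Order.TTheory GRing.Theory Num.Theory.
Local Open Scope ring_scope.

Section QDefs.
Variable R : realType.
Local Notation C := (R[i]).

Definition ctrmx m n (A : 'M[C]_(m, n)) : 'M[C]_(n, m) := (map_mx (fun z : C => z^*) A)^T.

Definition psdmx n (A : 'M[C]_n) : Prop :=
  forall v : 'cV[C]_n, 0 <= (ctrmx v *m A *m v) 0 0.

Definition unitarymx n (U : 'M[C]_n) : Prop := U *m ctrmx U = 1%:M.

(* (i,a)-(j,b) block of X in M_n (x) M_d, tensor index (i,a) |-> i*d + a *)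
Definition mxblock_tens n d (X : 'M[C]_(n * d)) (i j : 'I_n) : 'M[C]_d :=
  \matrix_(a, b) X (mxtens_index (i, a)) (mxtens_index (j, b)).

(* ampliation (id_n (x) T)(X) = sum_{i,j} E_ij (x) T(X_ij) *)
Definition ampl n d (T : 'M[C]_d -> 'M[C]_d) (X : 'M[C]_(n * d)) : 'M[C]_(n * d) :=
  \sum_(i < n) \sum_(j < n) (delta_mx i j *t T (mxblock_tens X i j)).

Definition is_linear_map d (T : 'M[C]_d -> 'M[C]_d) : Prop :=
  forall (a : C) (X Y : 'M[C]_d), T (a *: X + Y) = a *: T X + T Y.

Definition completely_positive d (T : 'M[C]_d -> 'M[C]_d) : Prop :=
  forall (n : nat) (X : 'M[C]_(n * d)), psdmx X -> psdmx (ampl T X).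

Definition trace_preserving d (T : 'M[C]_d -> 'M[C]_d) : Prop :=
  forall X : 'M[C]_d, \tr (T X) = \tr X.

Definition unital_channel d (T : 'M[C]_d -> 'M[C]_d) : Prop :=
  [/\ is_linear_map T, completely_positive T, trace_preserving T & T 1%:M = 1%:M].

Definition omega d : 'cV[C]_(d * d) :=
  (sqrtC (d%:R : C))^-1 *: \sum_(j < d) (delta_mx j (0 : 'I_1) *t delta_mx j (0 : 'I_1)).

Definition omega_proj d : 'M[C]_(d * d) := omega d *m ctrmx (omega d).

Definition choi d (T : 'M[C]_d -> 'M[C]_d) : 'M[C]_(d * d) := ampl T (omega_proj d).

Definition max_ent_unitary d (s : 'M[C]_(d * d)) : Prop :=
  exists U : 'M[C]_d, unitarymx U /\
    s = ((1%:M : 'M[C]_d) *t U) *m omega_proj d *m ((1%:M : 'M[C]_d) *t ctrmx U).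

Definition conv_hull m (S : 'M[C]_m -> Prop) (s : 'M[C]_m) : Prop :=
  exists (N : nat) (w : 'I_N -> R) (x : 'I_N -> 'M[C]_m),
    [/\ forall i, 0 <= w i, \sum_(i < N) w i = 1, forall i, S (x i) &
        s = \sum_(i < N) ((w i)%:C)%C *: x i].

Definition Uset d : 'M[C]_(d * d) -> Prop := conv_hull (@max_ent_unitary d).

(* ||T||_U as an infimum in the extended reals (inf of empty set = +oo) *)
Definition Unorm d (T : 'M[C]_d -> 'M[C]_d) : \bar R :=
  ereal_inf [set x : \bar R | exists (ap an : R) (sp sn : 'M[C]_(d * d)),
     [/\ choi T = (ap%:C)%C *: sp - (an%:C)%C *: sn, 0 <= ap, 0 <= an,
         Uset sp /\ Uset sn & x = (ap + an)%:E]].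

Definition compose_all d k (T : 'I_k -> 'M[C]_d -> 'M[C]_d) : 'M[C]_d -> 'M[C]_d :=
  foldr (fun i f => T i \o f) id (enum 'I_k).

End QDefs.

(* A linear map is determined by its Jamiolkowski state, so a decomposition
   rho_T = sum_i c_i rho_(Ad U_i) with real c_i, where Ad U X = U X U^dagger,
   lifts to T = sum_i c_i Ad U_i; and ||T||_U is the infimum of sum_i |c_i|
   over such decompositions.  Composing the lifted decompositions of T1 and T2
   gives one of T1 o T2 with coefficients c_i e_j and unitaries U_i V_j, whence
   submultiplicativity; adding scaled decompositions gives convexity.  Trace
   preservation forces sum_i c_i = 1, hence ||T||_U >= 1, which settles the
   cases where a norm is infinite. *)

From Pilot Require Import Defs.
From HB Require Import structures.
From mathcomp Require Import all_boot all_order all_algebra.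
From mathcomp Require Import all_classical all_reals ereal.
From mathcomp Require Import complex mxtens.
From mathcomp Require Import lra.
Import Order.TTheory GRing.Theory Num.Theory.
Local Open Scope ring_scope.

Set Implicit Arguments.
Unset Strict Implicit.
Unset Printing Implicit Defensive.

Lemma sum_nat_delta (S : pzSemiRingType) n (k : 'I_n) (F : 'I_n -> S) :
  \sum_(i < n) (k == i)%:R * F i = F k.
Proof.
rewrite (bigD1 k) //= eqxx mul1r big1 ?addr0 // => i /negbTE.
by rewrite eq_sym => ->; rewrite mul0r.
Qed.

Lemma mxtrace_delta (S : pzSemiRingType) n (i : 'I_n) :
  \tr (delta_mx i i : 'M[S]_n) = 1.
Proof.
rewrite /mxtrace; under eq_bigr do rewrite mxE andbb eq_sym -[_%:R]mulr1.
exact: sum_nat_delta.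
Qed.

Lemma lee_mul_approx (R : realFieldType) (z : \bar R) (u1 u2 : R) :
  0 <= u1 -> 0 <= u2 ->
  (forall x1 x2, u1 < x1 -> u2 < x2 -> (z <= (x1 * x2)%:E)%E) ->
  (z <= (u1 * u2)%:E)%E.
Proof.
move=> u1_ge0 u2_ge0 z_le; apply/lee_addgt0Pr => e e_gt0.
pose D := u1 + u2 + e + 1; have D_gt0 : 0 < D by rewrite /D; lra.
pose r := e / D; have r_gt0 : 0 < r by exact: divr_gt0.
have rD : r * D = e by rewrite divfK // gt_eqF.
have D_ge1 : 1 <= D by rewrite /D; lra.
have r_le : r <= e by nra.
apply: le_trans (z_le (u1 + r) (u2 + r) _ _) _; rewrite ?ltrDl // -EFinD lee_fin.
have : r * (u1 + u2 + r) <= r * D by rewrite ler_wpM2l ?(ltW r_gt0) // /D; lra.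
nra.
Qed.

Section TensmxLinear.
Variable S : comPzRingType.

Lemma tensmxDr m n p q (A : 'M[S]_(m, n)) (B B' : 'M[S]_(p, q)) :
  A *t (B + B') = A *t B + A *t B'.
Proof. by apply/matrixP => i j; rewrite !mxE mulrDr. Qed.

Lemma tensmxZr m n p q (A : 'M[S]_(m, n)) c (B : 'M[S]_(p, q)) :
  A *t (c *: B) = c *: (A *t B).
Proof. by apply/matrixP => i j; rewrite !mxE mulrCA. Qed.

Lemma tensmx_sumr m n p q (A : 'M[S]_(m, n)) (I : finType) (B : I -> 'M[S]_(p, q)) :
  A *t (\sum_i B i) = \sum_i A *t B i.
Proof. exact: (big_morph _ (tensmxDr A) (tensmx0 A)). Qed.

End TensmxLinear.

Section Choi.
Variable R : realType.
Local Notation C := R[i].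

Section Blocks.
Variables n d : nat.

Lemma tensmx_delta_sumE (F : 'I_n -> 'I_n -> 'M[C]_d) k a l b :
  (\sum_(i < n) \sum_(j < n) (delta_mx i j *t F i j))
     (mxtens_index (k, a)) (mxtens_index (l, b)) = F k l a b.
Proof.
rewrite summxE -[RHS](sum_nat_delta k (fun i => F i l a b)); apply: eq_bigr => i _.
rewrite summxE -(sum_nat_delta l (fun j => F i j a b)) mulr_sumr.
by apply: eq_bigr => j _; rewrite tensmxE !mxE -mulnb natrM mulrA.
Qed.

Lemma sum_mxblock_tens (X : 'M[C]_(n * d)) :
  \sum_(i < n) \sum_(j < n) (delta_mx i j *t mxblock_tens X i j) = X.
Proof.
apply/matrixP => k l.
case: (mxtens_indexP k) => i a; case: (mxtens_indexP l) => j b.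
by rewrite tensmx_delta_sumE mxE.
Qed.

Lemma mxblock_tens_ampl (T : 'M[C]_d -> 'M[C]_d) (X : 'M[C]_(n * d)) i j :
  mxblock_tens (ampl T X) i j = T (mxblock_tens X i j).
Proof. by apply/matrixP => a b; rewrite mxE /ampl tensmx_delta_sumE. Qed.

Lemma ampl_comb (I : finType) (c : I -> C) (T : I -> 'M[C]_d -> 'M[C]_d)
    (Y : 'M[C]_(n * d)) :
  ampl (fun X => \sum_i c i *: T i X) Y = \sum_i c i *: ampl (T i) Y.
Proof.
rewrite /ampl; under eq_bigr do under eq_bigr do
  rewrite tensmx_sumr; under eq_bigr do under eq_bigr do under eq_bigr do
  rewrite tensmxZr.
under eq_bigr do rewrite exchange_big /=.
rewrite exchange_big; apply: eq_bigr => i _.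
by rewrite scaler_sumr; apply: eq_bigr => j _; rewrite scaler_sumr.
Qed.

Lemma ampl_conj (A B : 'M[C]_d) (Y : 'M[C]_(n * d)) :
  ampl (fun X => A *m X *m B) Y = (1%:M *t A) *m Y *m (1%:M *t B).
Proof.
rewrite -[in RHS](sum_mxblock_tens Y) mulmx_sumr mulmx_suml; apply: eq_bigr => i _.
rewrite mulmx_sumr mulmx_suml; apply: eq_bigr => j _.
by rewrite !tensmx_mul mul1mx mulmx1.
Qed.

Lemma mxtrace_ampl (T : 'M[C]_d -> 'M[C]_d) (Y : 'M[C]_(n * d)) :
  \tr (ampl T Y) = \sum_(i < n) \tr (T (mxblock_tens Y i i)).
Proof.
rewrite /mxtrace (reindex (@mxtens_index n d)); last first.
  apply: onW_bij; exists (@mxtens_unindex n d).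
    exact: mxtens_indexK.
  exact: mxtens_unindexK.
rewrite (eq_bigr (fun p => T (mxblock_tens Y p.1 p.1) p.2 p.2)); last first.
  by move=> [i a] _; rewrite tensmx_delta_sumE.
by rewrite -(pair_big xpredT xpredT (fun i a => T (mxblock_tens Y i i) a a)).
Qed.

End Blocks.

Lemma ctrmxE m n (A : 'M[C]_(m, n)) i j : ctrmx A i j = (A j i)^*.
Proof. by rewrite !mxE. Qed.

Lemma omegaE d i a :
  omega R d (mxtens_index (i, a)) ord0 = (sqrtC (d%:R : C))^-1 * (i == a)%:R.
Proof.
rewrite /omega mxE summxE; congr (_ * _).
have -> : ord0 = mxtens_index (ord0 : 'I_1, ord0 : 'I_1) by apply: val_inj.
have ord0_eq0 : (ord0 : 'I_1) == 0 by [].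
under eq_bigr do rewrite tensmxE !mxE ord0_eq0 !andbT.
by rewrite sum_nat_delta eq_sym.
Qed.

Lemma mxblock_tens_omega_proj d i j :
  mxblock_tens (omega_proj R d) i j = (d%:R : C)^-1 *: delta_mx i j.
Proof.
apply/matrixP => a b.
rewrite [LHS]mxE /omega_proj [LHS]mxE big_ord1 ctrmxE !omegaE [RHS]mxE.
set c := (sqrtC (d%:R : C))^-1.
have c_ge0 : 0 <= c by rewrite invr_ge0 sqrtC_ge0 ler0n.
have -> : (d%:R : C)^-1 = c * c by rewrite -invfM -expr2 sqrtCK.
rewrite rmorphM /= geC0_conj // rmorph_nat mxE [(a == i)]eq_sym [(b == j)]eq_sym.
by rewrite -mulnb natrM mulrACA.
Qed.

Section LinearMap.
Variables (d : nat) (T : 'M[C]_d -> 'M[C]_d).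
Hypothesis T_lin : is_linear_map T.

Lemma linear_map0 : T 0 = 0.
Proof. by have := T_lin (-1) 0 0; rewrite scaler0 addr0 scaleN1r addNr. Qed.

Lemma linear_mapD X Y : T (X + Y) = T X + T Y.
Proof. by have := T_lin 1 X Y; rewrite !scale1r. Qed.

Lemma linear_mapZ a X : T (a *: X) = a *: T X.
Proof. by have := T_lin a X 0; rewrite !addr0 linear_map0 addr0. Qed.

Lemma linear_map_sum (I : finType) (F : I -> 'M[C]_d) :
  T (\sum_i F i) = \sum_i T (F i).
Proof. exact: (big_morph T linear_mapD linear_map0). Qed.

End LinearMap.

Lemma linear_map_comp d (T1 T2 : 'M[C]_d -> 'M[C]_d) :
  is_linear_map T1 -> is_linear_map T2 -> is_linear_map (T1 \o T2).
Proof. by move=> T1_lin T2_lin a X Y /=; rewrite T2_lin T1_lin. Qed.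

Lemma linear_map_comb d (I : finType) (c : I -> C) (T : I -> 'M[C]_d -> 'M[C]_d) :
  (forall i, is_linear_map (T i)) -> is_linear_map (fun X => \sum_i c i *: T i X).
Proof.
move=> T_lin a X Y; rewrite scaler_sumr -big_split; apply: eq_bigr => i _ /=.
by rewrite T_lin scalerDr !scalerA mulrC.
Qed.

Lemma choi_comb d (I : finType) (c : I -> C) (T : I -> 'M[C]_d -> 'M[C]_d) :
  choi (fun X => \sum_i c i *: T i X) = \sum_i c i *: choi (T i).
Proof. exact: ampl_comb. Qed.

Section ChoiIsomorphism.
Variable d : nat.
Hypothesis d_gt0 : (0 < d)%N.

Lemma choi_reconstruct (T : 'M[C]_d -> 'M[C]_d) X : is_linear_map T ->
  T X = \sum_(i < d) \sum_(j < d) ((d%:R : C) * X i j) *: mxblock_tens (choi T) i j.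
Proof.
move=> T_lin; have d_neq0 : (d%:R : C) != 0 by rewrite pnatr_eq0 -lt0n.
under eq_bigr do under eq_bigr do rewrite /choi mxblock_tens_ampl
  mxblock_tens_omega_proj -(linear_mapZ T_lin) scalerA mulrAC mulfV // mul1r.
under eq_bigr do rewrite -(linear_map_sum T_lin).
by rewrite -(linear_map_sum T_lin) -matrix_sum_delta.
Qed.

Lemma choi_inj (T1 T2 : 'M[C]_d -> 'M[C]_d) :
  is_linear_map T1 -> is_linear_map T2 -> choi T1 = choi T2 -> T1 =1 T2.
Proof.
by move=> T1_lin T2_lin eqT X; rewrite !choi_reconstruct // eqT.
Qed.

Lemma mxtrace_choi (T : 'M[C]_d -> 'M[C]_d) : trace_preserving T -> \tr (choi T) = 1.
Proof.
move=> T_tp; rewrite /choi mxtrace_ampl.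
under eq_bigr do rewrite T_tp mxblock_tens_omega_proj mxtraceZ mxtrace_delta mulr1.
by rewrite sumr_const card_ord -[_ *+ d]mulr_natr mulVf // pnatr_eq0 -lt0n.
Qed.

End ChoiIsomorphism.

Lemma ctrmx_mul m n p (A : 'M[C]_(m, n)) (B : 'M[C]_(n, p)) :
  ctrmx (A *m B) = ctrmx B *m ctrmx A.
Proof.
apply/matrixP => i j; rewrite !mxE rmorph_sum; apply: eq_bigr => k _.
by rewrite !mxE rmorphM mulrC.
Qed.

Lemma ctrmx1 n : ctrmx (1%:M : 'M[C]_n) = 1%:M.
Proof. by apply/matrixP => i j; rewrite !mxE eq_sym rmorph_nat. Qed.

Lemma unitarymx1 n : Defs.unitarymx (1%:M : 'M[C]_n).
Proof. by rewrite /Defs.unitarymx ctrmx1 mulmx1. Qed.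

Lemma unitarymx_mul d (U V : 'M[C]_d) :
  Defs.unitarymx U -> Defs.unitarymx V -> Defs.unitarymx (U *m V).
Proof.
rewrite /Defs.unitarymx ctrmx_mul => U_unitary V_unitary.
by rewrite mulmxA -(mulmxA U) V_unitary mulmx1 U_unitary.
Qed.

Definition Ad d (U X : 'M[C]_d) : 'M[C]_d := U *m X *m ctrmx U.

Lemma Ad1 d : Ad (1%:M : 'M[C]_d) =1 id.
Proof. by move=> X; rewrite /Ad ctrmx1 mul1mx mulmx1. Qed.

Lemma Ad_mul d (U V : 'M[C]_d) X : Ad U (Ad V X) = Ad (U *m V) X.
Proof. by rewrite /Ad ctrmx_mul !mulmxA. Qed.

Lemma Ad_linear d (U : 'M[C]_d) : is_linear_map (Ad U).
Proof. by move=> a X Y; rewrite /Ad mulmxDr mulmxDl -scalemxAr -scalemxAl. Qed.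

Lemma Ad_trace_preserving d (U : 'M[C]_d) :
  Defs.unitarymx U -> trace_preserving (Ad U).
Proof.
by move=> U_unitary X; rewrite /Ad mxtrace_mulC mulmxA (mulmx1C U_unitary) mul1mx.
Qed.

Lemma Uset_choi_Ad d (U : 'M[C]_d) : Defs.unitarymx U -> Uset (choi (Ad U)).
Proof.
move=> U_unitary; exists 1%N, (fun=> 1), (fun=> choi (Ad U)); split => //.
- by rewrite big_ord1.
- by move=> _; exists U; split => //; exact: ampl_conj.
- by rewrite big_ord1 rmorph1 scale1r.
Qed.

(* Splitting [c] into its positive and negative parts recovers the
   decompositions [ap sp - an sn] of [Unorm]. *)
Definition Ucomb_le d (M : 'M[C]_(d * d)) (x : R) : Prop :=
  exists (I : finType) (c : I -> R) (U : I -> 'M[C]_d),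
    [/\ forall i, Defs.unitarymx (U i),
        M = \sum_i ((c i)%:C)%C *: choi (Ad (U i)) & \sum_i `|c i| <= x].

Section UcombClosure.
Variable d : nat.
Implicit Types (M N : 'M[C]_(d * d)) (x y : R) (T : 'M[C]_d -> 'M[C]_d).

Lemma Ucomb_le0 : Ucomb_le (0 : 'M[C]_(d * d)) 0.
Proof.
by exists 'I_0, (fun=> 0), (fun=> 1%:M); split; [case | rewrite big_ord0 ..].
Qed.

Lemma Ucomb_leD M N x y : Ucomb_le M x -> Ucomb_le N y -> Ucomb_le (M + N) (x + y).
Proof.
move=> [I [c [U [U_unitary -> cx]]]] [J [e [V [V_unitary -> ey]]]].
exists (I + J)%type, (sum_rect (fun=> R) c e), (sum_rect (fun=> 'M[C]_d) U V).
by split; [case | rewrite big_sumType | rewrite big_sumType lerD].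
Qed.

Lemma Ucomb_leZ M x (a : R) : Ucomb_le M x -> Ucomb_le ((a%:C)%C *: M) (`|a| * x).
Proof.
move=> [I [c [U [U_unitary -> cx]]]].
exists I, (fun i => a * c i), U; split => //.
  by rewrite scaler_sumr; apply: eq_bigr => i _; rewrite scalerA rmorphM.
by under eq_bigr do rewrite normrM; rewrite -mulr_sumr ler_wpM2l.
Qed.

Lemma Ucomb_le_mono M x y : x <= y -> Ucomb_le M x -> Ucomb_le M y.
Proof.
move=> le_xy [I [c [U [U_unitary eqM cx]]]].
by exists I, c, U; split => //; exact: le_trans le_xy.
Qed.

Lemma Ucomb_le_Uset (s : 'M[C]_(d * d)) : Uset s -> Ucomb_le s 1.
Proof.
move=> [N [w [S [w_ge0 w_sum1 S_ent ->]]]].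
have [U U_ent] := fin_all_exists S_ent.
exists 'I_N, w, U; split.
- by move=> i; case: (U_ent i).
- by apply: eq_bigr => i _; case: (U_ent i) => _ ->; rewrite -ampl_conj.
- by under eq_bigr do rewrite ger0_norm //; rewrite w_sum1.
Qed.

Lemma Ucomb_le_split (sp sn : 'M[C]_(d * d)) ap an :
  Uset sp -> Uset sn -> 0 <= ap -> 0 <= an ->
  Ucomb_le ((ap%:C)%C *: sp - (an%:C)%C *: sn) (ap + an).
Proof.
move=> /Ucomb_le_Uset sp_comb /Ucomb_le_Uset sn_comb ap_ge0 an_ge0.
have := Ucomb_leD (Ucomb_leZ ap sp_comb) (Ucomb_leZ (- an) sn_comb).
by rewrite rmorphN scaleNr normrN !ger0_norm // !mulr1.
Qed.

Lemma Ucomb_le_trace T x : (0 < d)%N ->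
  trace_preserving T -> Ucomb_le (choi T) x -> 1 <= x.
Proof.
move=> d_gt0 T_tp [I [c [U [U_unitary choiT cx]]]].
have : (\sum_i c i)%:C%C = 1.
  rewrite rmorph_sum -(mxtrace_choi d_gt0 T_tp) choiT raddf_sum.
  apply: eq_bigr => i _; rewrite /= mxtraceZ mxtrace_choi ?mulr1 //.
  exact: Ad_trace_preserving.
rewrite -(rmorph1 (real_complex R)) => /fmorph_inj <-.
by apply: le_trans cx; apply: ler_sum => i _; exact: ler_norm.
Qed.

Lemma choi_eq_comb_Ad T (I : finType) (c : I -> R) (U : I -> 'M[C]_d) :
  (0 < d)%N -> is_linear_map T ->
  choi T = \sum_i ((c i)%:C)%C *: choi (Ad (U i)) ->
  T =1 (fun X => \sum_i ((c i)%:C)%C *: Ad (U i) X).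
Proof.
move=> d_gt0 T_lin choiT; apply: choi_inj => //.
  by apply: linear_map_comb => i; exact: Ad_linear.
by rewrite choiT choi_comb.
Qed.

Lemma Ucomb_le_comp T1 T2 x1 x2 : (0 < d)%N ->
  is_linear_map T1 -> is_linear_map T2 ->
  Ucomb_le (choi T1) x1 -> Ucomb_le (choi T2) x2 ->
  Ucomb_le (choi (T1 \o T2)) (x1 * x2).
Proof.
move=> d_gt0 T1_lin T2_lin [I [a [V [V_unitary choiT1 ax]]]].
move=> [J [c [U [U_unitary choiT2 cx]]]].
exists (I * J)%type, (fun p => a p.1 * c p.2), (fun p => V p.1 *m U p.2); split.
- by move=> [i j]; exact: unitarymx_mul.
- rewrite -choi_comb; congr choi; apply/funext => X /=.
  rewrite (choi_eq_comb_Ad d_gt0 T2_lin choiT2) (choi_eq_comb_Ad d_gt0 T1_lin choiT1).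
  rewrite -(pair_big xpredT xpredT
    (fun i j => ((a i * c j)%:C)%C *: Ad (V i *m U j) X)) /=.
  apply: eq_bigr => i _; rewrite (linear_map_sum (Ad_linear _)) scaler_sumr.
  by apply: eq_bigr => j _; rewrite (linear_mapZ (Ad_linear _)) Ad_mul scalerA rmorphM.
- rewrite -(pair_big xpredT xpredT (fun i j => `|a i * c j|)) /=.
  under eq_bigr do under eq_bigr do rewrite normrM.
  rewrite -big_distrlr /=.
  by apply: ler_pM => //; apply: sumr_ge0 => i _.
Qed.

End UcombClosure.

Lemma Uset_cone d (I : finType) (w : I -> R) (U : I -> 'M[C]_d) :
  (forall i, 0 <= w i) -> (forall i, Defs.unitarymx (U i)) ->
  exists2 s, Uset s &
    \sum_i ((w i)%:C)%C *: choi (Ad (U i)) = ((\sum_i w i)%:C)%C *: s.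
Proof.
move=> w_ge0 U_unitary; set W := \sum_i w i.
have [W0|W_neq0] := eqVneq W 0.
  exists (choi (Ad 1%:M)); first exact/Uset_choi_Ad/unitarymx1.
  rewrite W0 rmorph0 scale0r big1 // => i _.
  by rewrite (psumr_eq0P (fun i _ => w_ge0 i) W0) // rmorph0 scale0r.
have sum_enum (V : nmodType) (F : I -> V) :
    \sum_i F i = \sum_(k < #|I|) F (enum_val k) by exact: big_enum_val.
exists (\sum_i ((w i / W)%:C)%C *: choi (Ad (U i))).
  exists #|I|, (fun k => w (enum_val k) / W), (fun k => choi (Ad (U (enum_val k)))).
  split.
  - by move=> k; rewrite divr_ge0 // sumr_ge0.
  - by rewrite -mulr_suml -sum_enum mulfV.
  - by move=> k; exists (U (enum_val k)); split => //; exact: ampl_conj.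
  - exact: sum_enum.
rewrite scaler_sumr; apply: eq_bigr => i _.
by rewrite scalerA -rmorphM mulrC divfK.
Qed.

Section Unorm.
Variable d : nat.
Implicit Type T : 'M[C]_d -> 'M[C]_d.

Lemma Unorm_ge0 T : (0 <= Unorm T)%E.
Proof.
apply: le_ereal_inf_tmp => _ [ap [an [sp [sn [_ ap_ge0 an_ge0 _ ->]]]]].
by rewrite lee_fin addr_ge0.
Qed.

Lemma Unorm_le T x : Ucomb_le (choi T) x -> (Unorm T <= x%:E)%E.
Proof.
move=> [I [c [U [U_unitary choiT cx]]]].
pose cp i := (`|c i| + c i) / 2; pose cn i := (`|c i| - c i) / 2.
have c_bounds i : - `|c i| <= c i <= `|c i|.
  by rewrite ler_norm andbT lerNl -normrN ler_norm.
have cp_ge0 i : 0 <= cp i by have := c_bounds i; rewrite /cp; lra.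
have cn_ge0 i : 0 <= cn i by have := c_bounds i; rewrite /cn; lra.
have [sp sp_U cpE] := Uset_cone cp_ge0 U_unitary.
have [sn sn_U cnE] := Uset_cone cn_ge0 U_unitary.
apply: le_trans (ereal_inf_lbound _) _.
  exists (\sum_i cp i), (\sum_i cn i), sp, sn; split => //; try exact: sumr_ge0.
  rewrite -cpE -cnE -sumrB choiT; apply: eq_bigr => i _.
  by rewrite -scalerBl -rmorphB /cp /cn; congr (_%:C%C *: _); lra.
rewrite lee_fin -big_split /=; apply: le_trans cx; apply: ler_sum => i _.
by rewrite /cp /cn; lra.
Qed.

Lemma Unorm_gt T x : (Unorm T < x%:E)%E -> Ucomb_le (choi T) x.
Proof.
move=> /ereal_inf_lt [_ [ap [an [sp [sn [-> ap_ge0 an_ge0 [sp_U sn_U] ->]]]]]].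
by rewrite lte_fin => /ltW lex; apply: Ucomb_le_mono lex _; exact: Ucomb_le_split.
Qed.

Lemma Unorm_ge1 T : (0 < d)%N -> trace_preserving T -> (1 <= Unorm T)%E.
Proof.
move=> d_gt0 T_tp.
apply: le_ereal_inf_tmp => _ [ap [an [sp [sn [choiT ap_ge0 an_ge0 [sp_U sn_U] ->]]]]].
rewrite lee_fin; apply: Ucomb_le_trace d_gt0 T_tp _.
by rewrite choiT; exact: Ucomb_le_split.
Qed.

Lemma Unorm_comp T1 T2 : (0 < d)%N ->
  is_linear_map T1 -> trace_preserving T1 ->
  is_linear_map T2 -> trace_preserving T2 ->
  (Unorm (T1 \o T2) <= Unorm T1 * Unorm T2)%E.
Proof.
move=> d_gt0 T1_lin T1_tp T2_lin T2_tp.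
have T1_gt0 := lt_le_trans lte01 (Unorm_ge1 d_gt0 T1_tp).
have T2_gt0 := lt_le_trans lte01 (Unorm_ge1 d_gt0 T2_tp).
case E1: (Unorm T1) T1_gt0 => [u1| |] // u1_gt0; last by rewrite gt0_mulye ?leey.
case E2: (Unorm T2) T2_gt0 => [u2| |] // u2_gt0; last by rewrite gt0_muley ?leey.
rewrite -EFinM; apply: lee_mul_approx; rewrite -?lte_fin ?ltW // => x1 x2 ltx1 ltx2.
by apply/Unorm_le/Ucomb_le_comp => //; apply: Unorm_gt; rewrite ?E1 ?E2 lte_fin.
Qed.

End Unorm.

Section Composition.
Variables (d : nat) (I : Type) (T : I -> 'M[C]_d -> 'M[C]_d).
Hypotheses (T_lin : forall i, is_linear_map (T i))
           (T_tp : forall i, trace_preserving (T i)).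

Lemma linear_map_foldr_comp s : is_linear_map (foldr (fun i f => T i \o f) id s).
Proof. by elim: s => [|i s IH] //=; exact: linear_map_comp. Qed.

Lemma trace_preserving_foldr_comp s :
  trace_preserving (foldr (fun i f => T i \o f) id s).
Proof. by elim: s => [|i s IH] X //=; rewrite T_tp IH. Qed.

Lemma Unorm_foldr_comp s : (0 < d)%N ->
  (Unorm (foldr (fun i f => T i \o f) id s) <= \prod_(i <- s) Unorm (T i))%E.
Proof.
move=> d_gt0; elim: s => [|i s IH] /=.
  rewrite big_nil -(funext (Ad1 (d := d))); apply: (@Unorm_le _ _ 1).
  exact/Ucomb_le_Uset/Uset_choi_Ad/unitarymx1.
rewrite big_cons; apply: le_trans (Unorm_comp d_gt0 (T_lin i) (T_tp i)
  (linear_map_foldr_comp s) (trace_preserving_foldr_comp s)) _.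
exact: lee_pmul (Unorm_ge0 _) (Unorm_ge0 _) (lexx _) IH.
Qed.

End Composition.

Section Convexity.
Variables (d : nat) (I : finType) (p : I -> R) (T : I -> 'M[C]_d -> 'M[C]_d).
Hypotheses (p_ge0 : forall i, 0 <= p i) (p_sum1 : \sum_i p i = 1).

Lemma Unorm_mix_le (v : I -> R) :
  (forall i, 0 < p i -> Unorm (T i) = (v i)%:E) ->
  (Unorm (fun X => (\sum_i ((p i)%:C)%C *: T i X)%R) <= (\sum_i p i * v i)%:E)%E.
Proof.
move=> Tv; apply/lee_addgt0Pr => e e_gt0; apply: Unorm_le; rewrite choi_comb.
have -> : \sum_i p i * v i + e = \sum_i p i * (v i + e).
  rewrite -[e in LHS]mul1r -p_sum1 mulr_suml -big_split.
  by apply: eq_bigr => i _; rewrite mulrDr.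
apply: big_ind2 => [|M x N y|i _]; first exact: Ucomb_le0.
  exact: Ucomb_leD.
have [p0|p_neq0] := eqVneq (p i) 0.
  by rewrite p0 rmorph0 scale0r mul0r; exact: Ucomb_le0.
have p_gt0 : 0 < p i by rewrite lt_neqAle eq_sym p_neq0 p_ge0.
have /Unorm_gt Ti_comb : (Unorm (T i) < (v i + e)%:E)%E by rewrite Tv // lte_fin ltrDl.
by have := Ucomb_leZ (p i) Ti_comb; rewrite ger0_norm.
Qed.

Lemma Unorm_convex :
  (Unorm (fun X => (\sum_i ((p i)%:C)%C *: T i X)%R) <= \sum_i (p i)%:E * Unorm (T i))%E.
Proof.
have [[i p_gt0 Ti_oo]|T_fin] := pselect (exists2 i, 0 < p i & Unorm (T i) = +oo%E).
  rewrite (bigD1 i) //= Ti_oo gt0_muley ?lte_fin // addye ?leey // gt_eqF //.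
  apply: lt_le_trans ltNy0 _; apply: sume_ge0 => j _.
  by apply: mule_ge0; rewrite ?lee_fin ?Unorm_ge0.
have Tv i : 0 < p i -> Unorm (T i) = (fine (Unorm (T i)))%:E.
  move=> p_gt0; rewrite fineK // ge0_fin_numE ?Unorm_ge0 // ltey.
  by apply/eqP => Ti_oo; apply: T_fin; exists i.
rewrite (eq_bigr (fun i => (p i * fine (Unorm (T i)))%:E)) ?sumEFin.
  exact: Unorm_mix_le.
move=> i _; have [->|p_neq0] := eqVneq (p i) 0; first by rewrite mul0e mul0r.
by rewrite EFinM -Tv // lt_neqAle eq_sym p_neq0 p_ge0.
Qed.

End Convexity.

End Choi.

Theorem proposition3 (R : realType) (d k : nat) (hd : (0 < d)%N)
    (T : 'I_k -> 'M[R[i]]_d -> 'M[R[i]]_d) (p : 'I_k -> R)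
    (hT : forall i, unital_channel (T i))
    (hp0 : forall i, 0 <= p i) (hp1 : \sum_(i < k) p i = 1) :
  (Unorm (compose_all T) <= \prod_(i < k) Unorm (T i))%E /\
  (Unorm (fun X => (\sum_(i < k) ((p i)%:C)%C *: T i X)%R)
     <= \sum_(i < k) (p i)%:E * Unorm (T i))%E.
Proof.
have T_lin i : is_linear_map (T i) by case: (hT i).
have T_tp i : trace_preserving (T i) by case: (hT i).
split; last exact: Unorm_convex.
apply: le_trans (Unorm_foldr_comp T_lin T_tp (enum 'I_k) hd) _.
by rewrite big_enum.
Qed.
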